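(* Let $n\in\mathbb{N}$ and let $E$ be a normed space over $\mathbb{K}\in\{\mathbb{R},\mathbb{C}\}$ of infinite (algebraic) dimension $\lambda$. Then each of the following sets is $2^\lambda$-lineable: (i) the set of unbounded $n$-linear forms $E^n\to\mathbb{K}$; (ii) the set of unbounded symmetric $n$-linear forms $E^n\to\mathbb{K}$; (iii) the set of unbounded $n$-homogeneous polynomials $E\to\mathbb{K}$; (iv) the set of unbounded polynomials $E\to\mathbb{K}$ of degree at most $n$.
   Context: ''Unbounded'' means not bounded on the closed unit ball of $E$ (for an $n$-linear form $L$: $\sup\{|L(x_1,\ldots,x_n)|:\|x_i\|\le1\}=\infty$). A map $P:E\to\mathbb{K}$ is an $n$-homogeneous polynomial if $P(x)=L(x,\ldots,x)$ for some symmetric $n$-linear (not necessarily continuous) $L:E^n\to\mathbb{K}$; a polynomial of degree at most $n$ is a sum $P_0+P_1+\cdots+P_n$ with $P_0$ constant and $P_k$ $k$-homogeneous. For a cardinal $\mu$, a set $M$ of functions is $\mu$-lineable if $M\cup\{0\}$ contains a vector space of dimension $\mu$. *)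

From mathcomp Require Import all_boot all_algebra.
From mathcomp Require Import complex perm fingroup.
From mathcomp Require Import all_classical all_reals normedtype.
From Stdlib Require List.
Set Implicit Arguments. Unset Strict Implicit. Unset Printing Implicit Defensive.
Import GRing.Theory Num.Theory.
Local Open Scope ring_scope.

Section Defs.
Variable K : numFieldType.

Definition lin_indep (V : lmodType K) (I : Type) (f : I -> V) : Prop :=
  forall (s : seq I) (c : I -> K), List.NoDup s ->
    \sum_(i <- s) c i *: f i = 0 -> forall i, List.In i s -> c i = 0.

Definition spans (V : lmodType K) (I : Type) (f : I -> V) : Prop :=
  forall v : V, exists (s : seq I) (c : I -> K), v = \sum_(i <- s) c i *: f i.

Definition hamel_basis (V : lmodType K) (I : Type) (f : I -> V) : Prop :=
  lin_indep f /\ spans f.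

Definition fun_lin_indep (X J : Type) (f : J -> (X -> K)) : Prop :=
  forall (s : seq J) (c : J -> K), List.NoDup s ->
    (forall x, \sum_(j <- s) c j * f j x = 0) -> forall j, List.In j s -> c j = 0.

(** [M] is lineable "with dimension #|J|": M ∪ {0} contains a vector space of
    dimension #|J|, i.e. the span of a linearly independent family indexed by J. *)
Definition lineable_idx (X J : Type) (M : (X -> K) -> Prop) : Prop :=
  exists f : J -> (X -> K), fun_lin_indep f /\
    forall (s : seq J) (c : J -> K),
      let g := fun x => \sum_(j <- s) c j * f j x in
      (forall x, g x = 0) \/ M g.

Variable E : normedModType K.

Definition upd n (x : 'I_n -> E) (i : 'I_n) (y : E) : 'I_n -> E :=
  fun j => if j == i then y else x j.

Definition multilinear n (L : ('I_n -> E) -> K) : Prop :=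
  forall (i : 'I_n) (x : 'I_n -> E) (a : K) (u v : E),
    L (upd x i (a *: u + v)) = a * L (upd x i u) + L (upd x i v).

Definition symmetric_form n (L : ('I_n -> E) -> K) : Prop :=
  forall (s : {perm 'I_n}) (x : 'I_n -> E), L (fun j => x (s j)) = L x.

Definition unbounded_form n (L : ('I_n -> E) -> K) : Prop :=
  forall M : nat, exists x : 'I_n -> E,
    (forall i, `|x i| <= 1) /\ M%:R < `|L x|.

Definition unbounded_fun (P : E -> K) : Prop :=
  forall M : nat, exists x : E, `|x| <= 1 /\ M%:R < `|P x|.

Definition homogeneous_poly n (P : E -> K) : Prop :=
  exists L : ('I_n -> E) -> K,
    multilinear L /\ symmetric_form L /\ forall x, P x = L (fun _ => x).

Definition poly_deg_le n (P : E -> K) : Prop :=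
  exists (c : K) (Q : nat -> E -> K),
    (forall k, (1 <= k <= n)%N -> homogeneous_poly k (Q k)) /\
    forall x, P x = c + \sum_(1 <= k < n.+1) Q k x.

End Defs.

(** The statement of Theorem 3.3 for a given scalar field K. The dimension
    lambda of E is #|I| for a Hamel basis b : I -> E; 2^lambda = #|set I|. *)
Definition theorem3p3_for (K : numFieldType) : Prop :=
  forall (n : nat) (E : normedModType K) (I : Type) (b : I -> E),
    (0 < n)%N -> hamel_basis b -> infinite_set [set: I] ->
    [/\ lineable_idx (set I)
          (fun L : ('I_n -> E) -> K => multilinear L /\ unbounded_form L),
        lineable_idx (set I)
          (fun L : ('I_n -> E) -> K =>
             multilinear L /\ symmetric_form L /\ unbounded_form L),
        lineable_idx (set I)
          (fun P : E -> K => homogeneous_poly n P /\ unbounded_fun P)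
      & lineable_idx (set I)
          (fun P : E -> K => poly_deg_le n P /\ unbounded_fun P)].

(* Fix a Hamel basis (b_i)_{i in I} of E, normalised so that |b_i| = 1.  Every
   h : I -> K extends to a linear functional phi_h with phi_h(b_i) = h(i); with
   psi := phi_1, the symmetrisation L_h of phi_h (x) psi (x) ... (x) psi is a symmetric
   n-linear form, linear in h, with L_h(b_i, ..., b_i) = n h(i), hence unbounded on
   the unit ball as soon as h is unbounded.
   Since I is infinite, finite sequences of I and pairs (t, k) in I^{<omega} x N
   inject into I (Zorn), so basis vectors can be indexed by such pairs.  To A <= I
   associate h_A(t, k) = k * prod_{x in t} (if x \in A then 2 else 3).  The characters
   t |-> prod_{x in t} (2 or 3) of the free monoid on I are pairwise distinct for
   distinct A, hence linearly independent (Dedekind), so the forms L_{h_A} span a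
   space of dimension 2^|I|; and in a nonzero combination the coefficient function
   (t, k) |-> k * c(t) is unbounded because of the factor k.  Restricting to the
   diagonal gives the statements about polynomials. *)

From Pilot Require Import Defs.
From mathcomp Require Import all_boot all_algebra.
From mathcomp Require Import complex perm fingroup.
From mathcomp Require Import all_classical all_reals normedtype.
From Stdlib Require List.
From mathcomp Require Import ring order.
Set Implicit Arguments. Unset Strict Implicit. Unset Printing Implicit Defensive.
Import Order.TTheory GRing.Theory Num.Theory.
Local Open Scope classical_set_scope.
Local Open Scope ring_scope.

Definition injects (T U : Type) (A : set T) (B : set U) :=
  exists f : T -> U, {homo f : x / x \in A >-> x \in B} /\ {in A &, injective f}.

Section Matching.
Variable T : Type.
Implicit Types (X Y : set T) (G : set (T * T)).

Definition matching X Y G :=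
  [/\ forall p, G p -> X p.1 /\ Y p.2,
      forall x y y', G (x, y) -> G (x, y') -> y = y'
    & forall x x' y, G (x, y) -> G (x', y) -> x = x'].

Lemma matching_swap X Y G : matching X Y G -> matching Y X [set p | G (p.2, p.1)].
Proof.
by move=> [GXY Gfun Ginj]; split=> [[x y] /GXY[]|x y y'|x x' y]; [|apply: Ginj|apply: Gfun].
Qed.

Lemma matching_injects (t0 : T) X Y G : matching X Y G ->
  (forall x, X x -> exists y, G (x, y)) -> injects X Y.
Proof.
move=> [GXY _ Ginj] Gtot.
have /choice[f fG] : forall x, exists y, X x -> G (x, y).
  move=> x; have [/Gtot[y Gxy]|nX] := pselect (X x); first by exists y.
  by exists t0.
exists f; split=> [x|x x']; rewrite ?in_setE => /fG Gx; first exact: (GXY _ Gx).2.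
by move=> /fG Gx' e; apply: Ginj Gx _; rewrite e.
Qed.

Lemma matching_bigcup X Y (F : set (set (T * T))) :
  F `<=` matching X Y -> total_on F subset -> matching X Y (\bigcup_(G in F) G).
Proof.
move=> FM Ftot; have common p q : (\bigcup_(G in F) G) p -> (\bigcup_(G in F) G) q ->
    exists G, [/\ matching X Y G, G p & G q].
  move=> [G1 F1 G1p] [G2 F2 G2q].
  have [/(_ _ G1p) G2p|/(_ _ G2q) G1q] := Ftot _ _ F1 F2.
    by exists G2; split=> //; apply: FM.
  by exists G1; split=> //; apply: FM.
split=> [p [G /FM[GXY _ _] /GXY]//|x y y' Gy Gy'|x x' y Gx Gx'].
  by have [G [[_ Gfun _] Gy1 Gy2]] := common _ _ Gy Gy'; apply: Gfun Gy1 Gy2.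
by have [G [[_ _ Ginj] Gx1 Gx2]] := common _ _ Gx Gx'; apply: Ginj Gx1 Gx2.
Qed.

End Matching.

Lemma injects_total (T : Type) (t0 : T) (X Y : set T) : injects X Y \/ injects Y X.
Proof.
have [G [GM Gmax]] := Zorn_bigcup (@matching_bigcup T X Y).
have [Xtot|/existsNP[x /not_implyP[Xx xfree]]] := pselect (forall x, X x -> exists y, G (x, y)).
  by left; apply: matching_injects GM Xtot.
have [Ytot|/existsNP[y /not_implyP[Yy yfree]]] := pselect (forall y, Y y -> exists x, G (x, y)).
  by right; apply: matching_injects (matching_swap GM) Ytot.
exfalso; have [GXY Gfun Ginj] := GM; apply: (Gmax (G `|` [set (x, y)])).
  rewrite properEneq; split; last exact: subsetUl.
  apply/eqP => /(congr1 (@^~ (x, y))); rewrite propeqE => -[_ /(_ (or_intror erefl)) Gxy].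
  by apply: xfree; exists y.
split=> [p [/GXY//|->//]|a b b'|a a' b].
  move=> [Gab|/pair_equal_spec[-> ->]] [Gab'|/pair_equal_spec[ea ->]] //.
  - exact: Gfun Gab Gab'.
  - by case: xfree; exists b; rewrite -ea.
  - by case: xfree; exists b'.
move=> [Gab|/pair_equal_spec[-> ->]] [Gab'|/pair_equal_spec[-> eb]] //.
- exact: Ginj Gab Gab'.
- by case: yfree; exists a; rewrite -eb.
- by case: yfree; exists a'.
Qed.

Lemma injects_image (T U : Type) (x0 : T) (A : set T) (g : T -> U) :
  {in A &, injective g} -> injects (g @` A) A.
Proof.
move=> gI; have /choice[ginv ginvP] : forall y, exists x, y \in g @` A -> x \in A /\ g x = y.
  move=> y; have [/set_mem[x xA <-]|_] := boolP (y \in g @` A); last by exists x0.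
  by exists x; rewrite mem_set.
exists ginv; split=> [y /ginvP[]//|y y' /ginvP[_ gy] /ginvP[_ gy'] e].
by rewrite -gy -gy' e.
Qed.

Lemma map_homo_all (T U : Type) (A : set U) (B : set T) (u : T -> U) s :
  {homo u : x / x \in B >-> x \in A} -> all [in B] s -> all [in A] (map u s).
Proof. by move=> uBA sB; rewrite all_map; apply: sub_all sB => x /uBA. Qed.

Section SeqAbsorption.
Variable I : Type.
Implicit Types (A B : set I) (f : seq I -> I) (G : set (seq I * I)).

Definition absorbs A f :=
  (forall s, all [in A] s -> f s \in A) /\ {in [pred s | all [in A] s] &, injective f}.

Lemma absorbs_map A B f u : absorbs A f -> {homo u : x / x \in B >-> x \in A} ->
  forall s, all [in B] s -> f (map u s) \in A.
Proof. by move=> [fA _] uBA s /(map_homo_all uBA)/fA. Qed.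

Lemma absorbs_injects_union A B f : absorbs A f -> injects B A -> injects (A `|` B) A.
Proof.
move=> [fA fI] [h [hBA hI]].
have hB x : x \in A `|` B -> x \notin A -> x \in B.
  by rewrite in_setU => /orP[->//|].
exists (fun x => if x \in A then f [:: x] else f [:: h x; h x]); split.
  by move=> x xAB; case: ifPn => xA; apply: fA; rewrite /= ?xA ?hBA ?hB.
move=> x y xAB yAB; case: ifPn => xA; case: ifPn => yA /fI;
  rewrite !inE /= ?xA ?yA ?hBA ?hB // => /(_ isT isT) [] //.
by move=> /hI ->; rewrite ?hB.
Qed.

Lemma absorbs_seq_inj A f : absorbs A f -> injects (~` A) A ->
  exists F : seq I -> I, injective F.
Proof.
move=> Af /(absorbs_injects_union Af) [u []]; rewrite setUv => uA uI.
have uAs s : all [in A] (map u s).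
  by rewrite all_map; apply: sub_all (all_predT s) => x _; rewrite /= uA ?in_setT.
exists (f \o map u) => s t /Af.2; rewrite !inE => /(_ (uAs s) (uAs t)).
by apply: inj_map => x y; apply: uI; rewrite in_setT.
Qed.

Lemma absorbs_extend A f : absorbs A f -> injects A (~` A) ->
  exists A' f', [/\ A `<` A', absorbs A' f' & {in [pred s | all [in A] s], f' =1 f}].
Proof.
move=> Af [g [gA gI]].
have f0A : f [::] \in A by apply: Af.1.
pose B := g @` A.
have [u [uA uI]] := absorbs_injects_union Af (injects_image (f [::]) gI).
have gB x : x \in A -> g x \in B by move=> xA; apply/mem_set/imageP/set_mem.
have gnA x : x \in A -> g x \notin A by move=> /gA; rewrite in_setC.
exists (A `|` B), (fun s => if all [in A] s then f s else g (f (map u s))); split.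
- split; first by apply: subsetUl.
  move=> /(_ (g (f [::]))); rewrite -in_setE in_setU gB // orbT => /(_ isT).
  by rewrite -in_setE; apply/negP/gnA.
- split=> [s sAB|s t].
    by case: ifP => sA; rewrite in_setU ?Af.1 ?gB ?(absorbs_map Af uA) ?orbT.
  rewrite !inE => sAB tAB.
  have Fs := absorbs_map Af uA sAB; have Ft := absorbs_map Af uA tAB.
  case: ifP => sA; case: ifP => tA.
  + by apply: Af.2; rewrite inE.
  + by move=> e; have := gnA _ Ft; rewrite -e Af.1.
  + by move=> e; have := gnA _ Fs; rewrite e Af.1.
  + move=> /(gI _ _ Fs Ft) /Af.2; rewrite !inE !(map_homo_all uA) // => /(_ isT isT).
    exact: (inj_in_map uI).
- by move=> s sA; rewrite inE in sA; rewrite sA.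
Qed.

Lemma absorbs_range (io : nat -> I) : injective io ->
  exists f, absorbs (range io) f.
Proof.
move=> ioI; pose inv := 'pinv_(fun=> 0%N) [set: nat] io.
have invK : cancel io inv by move=> n; apply: pinvKV; rewrite ?in_setT // => m k _ _ /ioI.
have invI : {in range io &, injective inv}.
  by move=> _ _ /set_mem[n _ <-] /set_mem[m _ <-]; rewrite !invK => ->.
exists (fun s => io (pickle (map inv s))); split=> [s _|s t sA tA /ioI /(pcan_inj pickleK)].
  by apply/mem_set; exists (pickle (map inv s)).
exact: inj_in_map invI s t sA tA.
Qed.

(* Absorbing pairs (A, f) are recorded through the graph of f on A-sequences, so that
   Zorn's lemma for families of sets applies: the union of a chain of such graphs is
   again one. *)
Definition graph A f : set (seq I * I) := [set p | all [in A] p.1 /\ f p.1 = p.2].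

Definition carrier G : set I := [set x | exists y, G ([:: x], y)].

Definition absorbing_graph G :=
  [/\ forall s y y', G (s, y) -> G (s, y') -> y = y',
      forall s s' y, G (s, y) -> G (s', y) -> s = s',
      forall s, (exists y, G (s, y)) <-> all [in carrier G] s
    & forall s y, G (s, y) -> carrier G y].

Lemma carrier_graph A f : carrier (graph A f) = A.
Proof.
apply/seteqP; split=> [x [y [/= /andP[+ _] _]]|x Ax]; first by rewrite in_setE.
by exists (f [:: x]); split; rewrite //= andbT in_setE.
Qed.

Lemma carrierS G G' : G `<=` G' -> carrier G `<=` carrier G'.
Proof. by move=> GG' x [y Gy]; exists y; apply: GG'. Qed.

Lemma graph_absorbing A f : absorbs A f -> absorbing_graph (graph A f).
Proof.
move=> [fA fI]; rewrite /absorbing_graph carrier_graph; split.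
- by move=> s y y' [_ /= <-] [_ /= <-].
- by move=> s s' y [sA /= <-] [s'A /= /esym]; apply: fI.
- by move=> s; split=> [[y []]|sA] //; exists (f s).
- by move=> s y [sA /= <-]; rewrite -in_setE; apply: fA.
Qed.

Lemma absorbing_graphE G (x0 : I) : absorbing_graph G ->
  exists f, absorbs (carrier G) f /\ G = graph (carrier G) f.
Proof.
move=> [Gfun Ginj Gdom Gran].
have /choice[f fG] : forall s, exists y, (exists y, G (s, y)) -> G (s, y).
  move=> s; have [[y Gsy]|nG] := pselect (exists y, G (s, y)); first by exists y.
  by exists x0.
have Gf s : all [in carrier G] s -> G (s, f s) by move=> /Gdom /fG.
exists f; split; first split.
- by move=> s /Gf /Gran; rewrite in_setE.
- by move=> s t; rewrite !inE => /Gf Gs /Gf Gt e; apply: (Ginj _ _ (f s) Gs); rewrite e.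
- apply/seteqP; split=> [[s y] Gsy|[s y] [/= /Gf Gs <-//]].
  have sG : all [in carrier G] s by apply/Gdom; exists y.
  by split=> //=; apply: Gfun (Gf _ sG) Gsy.
Qed.

Lemma absorbing_graph_bigcup (F : set (set (seq I * I))) :
  F `<=` [set G | G = set0 \/ absorbing_graph G] -> total_on F subset ->
  \bigcup_(G in F) G !=set0 -> absorbing_graph (\bigcup_(G in F) G).
Proof.
move=> FP Ftot [p0 [G0 FG0 G0p0]]; set U := \bigcup_(G in F) G.
have Fabs G p : F G -> G p -> absorbing_graph G by move=> /FP[->//|].
have UG G : F G -> G `<=` U by move=> FG p Gp; exists G.
have upper G1 G2 : F G1 -> F G2 -> exists G, [/\ F G, G1 `<=` G & G2 `<=` G].
  by move=> F1 F2; have [G12|G21] := Ftot _ _ F1 F2; [exists G2|exists G1]; split.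
have common p q : U p -> U q -> exists G, [/\ F G, G p & G q].
  move=> [G1 F1 G1p] [G2 F2 G2q]; have [G [FG G1G G2G]] := upper _ _ F1 F2.
  by exists G; split; [|apply: G1G|apply: G2G].
split.
- move=> s y y' Uy Uy'; have [G [FG Gy Gy']] := common _ _ Uy Uy'.
  by have [Gfun _ _ _] := Fabs _ _ FG Gy; apply: Gfun Gy Gy'.
- move=> s s' y Us Us'; have [G [FG Gs Gs']] := common _ _ Us Us'.
  by have [_ Ginj _ _] := Fabs _ _ FG Gs; apply: Ginj Gs Gs'.
- move=> s; split=> [[y [G FG Gsy]]|].
    have [_ _ Gdom _] := Fabs _ _ FG Gsy.
    have /Gdom : exists y, G (s, y) by exists y.
    by apply: sub_all => x; rewrite !in_setE; apply: carrierS (UG _ FG) x.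
  move=> sU; suff [G [p [FG Gp sG]]] : exists G p, [/\ F G, G p & all [in carrier G] s].
    by have [_ _ /(_ s)/proj2/(_ sG)[y Gsy] _] := Fabs _ _ FG Gp; exists y, G.
  elim: s sU => [_|x s IH /= /andP[]]; first by exists G0, p0; split.
  rewrite in_setE => -[y [G1 F1 G1xy]] /IH[G [p [FG Gp sG]]].
  have [G' [FG' G1G' GG']] := upper _ _ F1 FG.
  exists G', p; split=> [//||/=]; first exact: GG'.
  apply/andP; split; first by rewrite in_setE; exists y; apply: G1G'.
  by apply: sub_all sG => z; rewrite !in_setE; apply: carrierS.
- move=> s y [G FG Gsy]; have [_ _ _ Gran] := Fabs _ _ FG Gsy.
  exact: carrierS (UG _ FG) _ (Gran _ _ Gsy).
Qed.

Lemma graph_proper A A' f f' :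
  A `<` A' -> {in [pred s | all [in A] s], f' =1 f} -> graph A f `<` graph A' f'.
Proof.
move=> AA' f'f; rewrite properEneq; split.
  apply/eqP => /(congr1 carrier); rewrite !carrier_graph => AA.
  by move: AA'; rewrite AA => /properxx.
move=> [s y] [/= sA <-]; split=> /=; last by rewrite f'f.
by apply: sub_all sA => x; rewrite !in_setE; apply: (proj1 AA').
Qed.

End SeqAbsorption.

Lemma nat_inj_of_infinite (I : Type) : infinite_set [set: I] ->
  exists f : nat -> I, injective f.
Proof.
move=> /infiniteP /card_leP [f].
exists (fun n => val (f (@SigSub _ _ [set: nat] n (in_setT n)))).
move=> m n /val_inj H.
by have /(congr1 val) := @inj _ _ _ f _ _ (in_setT _) (in_setT _) H.
Qed.

(* A maximal absorbing set cannot inject into its complement, since it would then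
   absorb a disjoint copy of itself as well; so the complement injects into it, and
   then so do all finite sequences of I. *)
Lemma seq_inj_of_infinite (I : Type) : infinite_set [set: I] ->
  exists F : seq I -> I, injective F.
Proof.
move=> /nat_inj_of_infinite[io ioI].
pose P G := G = set0 \/ @absorbing_graph I G.
have [M [PM Mmax]] : exists M, P M /\ forall G, M `<` G -> ~ P G.
  apply: Zorn_bigcup => F FP Ftot.
  have [UF0|/eqP/set0P UF] := pselect (\bigcup_(G in F) G = set0); first by left.
  by right; apply: absorbing_graph_bigcup.
have {PM}MG : absorbing_graph M.
  case: PM => // M0; have [f Af] := absorbs_range ioI.
  exfalso; apply: (Mmax (graph (range io) f)); last by right; apply: graph_absorbing.
  rewrite M0 properEneq; split=> //; apply/eqP/nesym/eqP/set0P.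
  by exists ([::], f [::]).
have [f [Af Mf]] := absorbing_graphE (io 0%N) MG; rewrite {}Mf in Mmax.
have [|] := injects_total (io 0%N) (carrier M) (~` carrier M); last exact: absorbs_seq_inj Af.
move=> /(absorbs_extend Af)[A' [f' [AA' Af' f'f]]]; exfalso.
by apply: (Mmax (graph A' f')); [apply: graph_proper|right; apply: graph_absorbing].
Qed.

Lemma In_mem (T : eqType) (s : seq T) x : List.In x s -> x \in s.
Proof. by elim: s => [|y s IH] //= [->|/IH]; rewrite inE ?eqxx // => ->; rewrite orbT. Qed.

Lemma mem_In (T : eqType) (s : seq T) x : x \in s -> List.In x s.
Proof. by elim: s => [|y s IH] //=; rewrite inE => /orP[/eqP ->|/IH]; [left|right]. Qed.

Lemma uniq_NoDup (T : eqType) (s : seq T) : uniq s -> List.NoDup s.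
Proof.
elim: s => [|x s IH] /=; first by constructor.
by move=> /andP[xs us]; constructor; [move=> /In_mem; apply/negP|exact: IH].
Qed.

Lemma big1_In (R : nmodType) (J : Type) (s : seq J) (F : J -> R) :
  (forall j, List.In j s -> F j = 0) -> \sum_(j <- s) F j = 0.
Proof.
elim: s => [|x s IH] F0; first by rewrite big_nil.
by rewrite big_cons F0 ?IH ?add0r //= => [j js|]; [apply: F0; right|left].
Qed.

Lemma big_scale_group (K : pzRingType) (V : lmodType K) (T : eqType) (X : Type)
    (io : X -> T) (al : X -> K) (w : T -> V) (u : seq T) (r : seq X) :
  uniq u -> {subset map io r <= u} ->
  \sum_(k <- r) al k *: w (io k) = \sum_(i <- u) (\sum_(k <- r | io k == i) al k) *: w i.
Proof.
move=> uu; elim: r => [|x r IH] /= ru.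
  by rewrite big_nil big1 // => i _; rewrite big_nil scale0r.
rewrite big_cons IH => [|k kr]; last by apply: ru; rewrite inE kr orbT.
have xu : io x \in u by apply: ru; rewrite inE eqxx.
transitivity (\sum_(i <- u) ((if io x == i then al x else 0) *: w i +
    (\sum_(k <- r | io k == i) al k) *: w i)); last first.
  by apply: eq_bigr => i _; rewrite big_cons -scalerDl; case: (io x == i); rewrite ?add0r.
rewrite big_split /=; congr (_ + _).
rewrite (big_rem (io x)) //= eqxx big1_seq ?addr0 // => i /andP[_ iu].
by case: eqP iu => [<-|_ _]; rewrite ?mem_rem_uniqF ?scale0r.
Qed.

Section HamelBasis.
Variables (K : numFieldType) (V : lmodType K) (I : Type) (b : I -> V).

Lemma lin_indep_neq0 : lin_indep b -> forall i, b i != 0.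
Proof.
move=> bI i; apply/eqP => bi0.
have := bI [:: i] (fun _ => 1) (List.NoDup_cons i (@List.in_nil _ i) (List.NoDup_nil _)).
by rewrite big_seq1 bi0 scaler0 => /(_ erefl i (or_introl erefl)) /eqP; rewrite oner_eq0.
Qed.

Lemma hamel_basis_scale (c : I -> K) : (forall i, c i != 0) ->
  hamel_basis b -> hamel_basis (fun i => c i *: b i).
Proof.
move=> c0 [bI bS]; split=> [s a nd|v].
  under eq_bigr do rewrite scalerA.
  by move=> /(bI _ _ nd) a0 i /a0 /eqP; rewrite mulf_eq0 (negbTE (c0 i)) orbF => /eqP.
have [s [a ->]] := bS v; exists s, (fun i => a i / c i).
by apply: eq_bigr => i _; rewrite scalerA divfK.
Qed.

Hypothesis hb : hamel_basis b.

Lemma hamel_comb_eq0 (X : Type) (io : X -> I) (al : X -> K) (r : seq X) :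
  \sum_(k <- r) al k *: b (io k) = 0 ->
  forall h : I -> K, \sum_(k <- r) al k * h (io k) = 0.
Proof.
move=> r0 h; pose u := undup (map (io : X -> {classic I}) r).
have uu : uniq u by apply: undup_uniq.
have ru : {subset map (io : X -> {classic I}) r <= u} by move=> i; rewrite mem_undup.
rewrite [LHS](@big_scale_group K K^o {classic I} X io al h u r uu ru).
rewrite (@big_scale_group K V {classic I} X io al b u r uu ru) in r0.
rewrite big1_seq // => i /andP[_ iu].
by rewrite (hb.1 u _ (uniq_NoDup uu) r0 i (mem_In iu)) scale0r.
Qed.

Definition hamel_supp (v : V) : seq I := projT1 (cid (hb.2 v)).
Definition hamel_coord (v : V) : I -> K := projT1 (cid (projT2 (cid (hb.2 v)))).

Lemma hamel_reprE v : v = \sum_(i <- hamel_supp v) hamel_coord v i *: b i.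
Proof. exact: projT2 (cid (projT2 (cid (hb.2 v)))). Qed.

Definition hamel_ext (h : I -> K) (v : V) : K :=
  \sum_(i <- hamel_supp v) hamel_coord v i * h i.

Lemma hamel_ext_comb (X : Type) (io : X -> I) (al : X -> K) (r : seq X) v h :
  \sum_(k <- r) al k *: b (io k) = v -> hamel_ext h v = \sum_(k <- r) al k * h (io k).
Proof.
move=> rv.
pose io' (p : I + X) := match p with inl i => i | inr k => io k end.
pose al' (p : I + X) := match p with inl i => hamel_coord v i | inr k => - al k end.
have r'0 : \sum_(p <- map inl (hamel_supp v) ++ map inr r) al' p *: b (io' p) = 0.
  rewrite big_cat !big_map /=.
  under [X in _ + X]eq_bigr do rewrite scaleNr.
  by rewrite sumrN rv -hamel_reprE subrr.
have := hamel_comb_eq0 r'0 h; rewrite big_cat !big_map /=.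
under [X in _ + X = _]eq_bigr do rewrite mulNr.
by rewrite sumrN => /subr0_eq.
Qed.

Lemma hamel_ext_linear h : linear_for *%R (hamel_ext h).
Proof.
move=> a u v.
pose io (p : I + I) := match p with inl i => i | inr i => i end.
pose al (p : I + I) := match p with inl i => a * hamel_coord u i | inr i => hamel_coord v i end.
rewrite (@hamel_ext_comb _ io al (map inl (hamel_supp u) ++ map inr (hamel_supp v))).
  rewrite big_cat !big_map /= /hamel_ext mulr_sumr; congr (_ + _).
  by apply: eq_bigr => i _; rewrite mulrA.
rewrite big_cat !big_map /= -hamel_reprE [u in a *: u]hamel_reprE scaler_sumr.
by congr (_ + _); apply: eq_bigr => i _; rewrite scalerA.
Qed.

Lemma hamel_ext_basis h i : hamel_ext h (b i) = h i.
Proof. by rewrite (@hamel_ext_comb _ id (fun _ => 1) [:: i]) ?big_seq1 ?mul1r ?scale1r. Qed.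

Lemma hamel_ext_sum (J : Type) (s : seq J) (c : J -> K) (f : J -> I -> K) v :
  hamel_ext (fun i => \sum_(j <- s) c j * f j i) v = \sum_(j <- s) c j * hamel_ext (f j) v.
Proof.
rewrite /hamel_ext; under eq_bigr do rewrite mulr_sumr.
rewrite exchange_big; apply: eq_bigr => j _; rewrite mulr_sumr.
by apply: eq_bigr => i _; rewrite mulrCA.
Qed.

Lemma hamel_ext0 v : hamel_ext (fun=> 0) v = 0.
Proof. by rewrite /hamel_ext big1 // => i _; rewrite mulr0. Qed.

End HamelBasis.

Section SumOfProducts.
Variables (K : numFieldType) (E : normedModType K) (n : nat).

Lemma prod_upd (G : 'I_n -> E -> K) (x : 'I_n -> E) i y :
  \prod_k G k (upd x i y k) = G i y * \prod_(k | k != i) G k (x k).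
Proof.
rewrite (bigD1 i) //= /upd eqxx; congr (_ * _).
by apply: eq_bigr => k /negbTE ->.
Qed.

Lemma multilinear_sum_prod (G : 'I_n -> 'I_n -> E -> K) :
  (forall j k, linear_for *%R (G j k)) ->
  multilinear (fun x : 'I_n -> E => \sum_j \prod_k G j k (x k)).
Proof.
move=> Glin i x a u v /=; rewrite mulr_sumr -big_split /=; apply: eq_bigr => j _.
by rewrite !prod_upd Glin mulrDl mulrA.
Qed.

Lemma symmetric_sum_prod (G : 'I_n -> 'I_n -> E -> K) :
  (forall j k (s : {perm 'I_n}), G j ((s^-1)%g k) = G (s j) k) ->
  Defs.symmetric_form (fun x : 'I_n -> E => \sum_j \prod_k G j k (x k)).
Proof.
move=> GP s x /=.
transitivity (\sum_j \prod_k G (s j) k (x k)).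
  apply: eq_bigr => j _; rewrite (reindex_inj (perm_inj (s := (s^-1)%g))) /=.
  by apply: eq_bigr => k _; rewrite permKV GP.
by rewrite [RHS](reindex_inj (perm_inj (s := s))).
Qed.

Variables (phi psi : E -> K).

Definition sym_prod (x : 'I_n -> E) : K :=
  \sum_j \prod_k (if k == j then phi else psi) (x k).

Lemma sym_prodE x : sym_prod x = \sum_j phi (x j) * \prod_(k | k != j) psi (x k).
Proof.
apply: eq_bigr => j _; rewrite (bigD1 j) //= eqxx; congr (_ * _).
by apply: eq_bigr => k /negbTE ->.
Qed.

Lemma sym_prod_multilinear : linear_for *%R phi -> linear_for *%R psi -> multilinear sym_prod.
Proof.
move=> phiL psiL.
by apply: (@multilinear_sum_prod (fun j k => if k == j then phi else psi)) => j k; case: (k == j).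
Qed.

Lemma sym_prod_symmetric : Defs.symmetric_form sym_prod.
Proof.
apply: (@symmetric_sum_prod (fun j k => if k == j then phi else psi)) => j k s.
by rewrite -(inj_eq (perm_inj (s := s))) permKV.
Qed.

Lemma sym_prod_diag v : sym_prod (fun=> v) = n%:R * (phi v * psi v ^+ n.-1).
Proof.
rewrite sym_prodE (eq_bigr (fun=> phi v * psi v ^+ n.-1)) ?sumr_const ?card_ord ?mulr_natl //.
by move=> j _; rewrite prodr_const cardC1 card_ord.
Qed.

End SumOfProducts.

Lemma sym_prod_suml (K : numFieldType) (E : normedModType K) (n : nat) (J : Type)
    (s : seq J) (c : J -> K) (phi : J -> E -> K) (psi : E -> K) (x : 'I_n -> E) :
  sym_prod (fun v => \sum_(j <- s) c j * phi j v) psi x =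
  \sum_(j <- s) c j * sym_prod (phi j) psi x.
Proof.
rewrite sym_prodE; under eq_bigr do rewrite mulr_suml.
rewrite exchange_big /=; apply: eq_bigr => j _.
by rewrite sym_prodE mulr_sumr; apply: eq_bigr => k _; rewrite mulrA.
Qed.

Lemma sym_prod0l (K : numFieldType) (E : normedModType K) (n : nat) (psi : E -> K)
    (x : 'I_n -> E) :
  sym_prod (fun=> 0) psi x = 0.
Proof. by rewrite sym_prodE big1 // => j _; rewrite mul0r. Qed.

Lemma prod_char_lin_indep (K : numFieldType) (J X : Type) (chi : J -> X -> K) :
  injective chi -> fun_lin_indep (fun j (t : seq X) => \prod_(x <- t) chi j x).
Proof.
move=> chi_inj; elim=> [|j1 s IH] c nd Hc //.
have [nj1 nds] : ~ List.In j1 s /\ List.NoDup s by inversion nd.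
have cs j : List.In j s -> c j = 0.
  move=> js; have [x chi_x] : exists x, chi j x != chi j1 x.
    apply: contra_notP nj1 => /forallNP chi_eq.
    suff <- : j = j1 by [].
    by apply: chi_inj; apply: funext => x; apply/eqP/negbNE/negP/chi_eq.
  (* c' combines [Hc (x :: t)] minus [chi j1 x] times [Hc t], in which j1 cancels. *)
  pose c' k := c k * (chi k x - chi j1 x).
  suff /(IH c' nds)/(_ _ js)/eqP : forall t, \sum_(k <- s) c' k * \prod_(y <- t) chi k y = 0.
    by rewrite mulf_eq0 subr_eq0 (negbTE chi_x) orbF => /eqP.
  move=> t; have e1 := Hc (x :: t); have e2 := Hc t.
  rewrite big_cons in e1; rewrite big_cons in e2.
  move/eqP: e1; rewrite addrC addr_eq0 => /eqP e1.
  move/eqP: e2; rewrite addrC addr_eq0 => /eqP e2.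
  transitivity (\sum_(k <- s) c k * \prod_(y <- x :: t) chi k y -
      chi j1 x * \sum_(k <- s) c k * \prod_(y <- t) chi k y).
    by rewrite mulr_sumr -sumrB; apply: eq_bigr => k _; rewrite /c' big_cons; ring.
  by rewrite e1 e2 big_cons; ring.
move=> j [<-|/cs//]; have := Hc [::].
by rewrite big_cons big1_In => [|k /cs->]; rewrite ?big_nil ?mulr1 ?addr0 ?mul0r.
Qed.

Section Construction.
Variables (K : numFieldType) (E : normedModType K) (I : Type) (b : I -> E).
Hypotheses (hb : hamel_basis b) (b_unit : forall i, `|b i| = 1).
Variables (n : nat) (code : seq I * nat -> I).
Hypotheses (n_gt0 : (0 < n)%N) (code_inj : injective code)
  (archi : forall x : K, 0 <= x -> exists k : nat, x < k%:R).

Definition decode (i : I) : option (seq I * nat) :=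
  if pselect (exists p, code p = i) is left H then Some (projT1 (cid H)) else None.

Lemma decode_code p : decode (code p) = Some p.
Proof.
rewrite /decode; case: pselect => [H|[]]; last by exists p.
by congr Some; apply: code_inj; rewrite (projT2 (cid H)).
Qed.

Definition mark (A : set I) (x : I) : K := if `[< A x >] then 2 else 3.

Lemma mark_inj : injective mark.
Proof.
move=> A B AB; apply/funext => x; apply/propext.
have := congr1 (@^~ x) AB; rewrite /mark.
by case: asboolP; case: asboolP => // ? ? /eqP; rewrite eqr_nat.
Qed.

Definition weight (A : set I) (i : I) : K :=
  if decode i is Some (t, k) then k%:R * \prod_(x <- t) mark A x else 0.

Definition psi : E -> K := hamel_ext hb (fun=> 1).

Definition form (A : set I) : ('I_n -> E) -> K := sym_prod (hamel_ext hb (weight A)) psi.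

Lemma sym_prod_basis h i :
  sym_prod (hamel_ext hb h) psi (fun _ : 'I_n => b i) = n%:R * h i.
Proof. by rewrite sym_prod_diag /psi !hamel_ext_basis expr1n mulr1. Qed.

Lemma diag_form_lin_indep : fun_lin_indep (fun A (v : E) => form A (fun=> v)).
Proof.
move=> s c nd cform; apply: (prod_char_lin_indep mark_inj nd) => t.
have /eqP := cform (b (code (t, 1%N))).
under eq_bigr do rewrite /form sym_prod_basis /weight decode_code mul1r mulrCA.
by rewrite -mulr_sumr mulf_eq0 pnatr_eq0 (gtn_eqF n_gt0) => /eqP.
Qed.

Lemma form_lin_indep : fun_lin_indep form.
Proof. by move=> s c nd cform; apply: diag_form_lin_indep nd _ => v; apply: cform. Qed.

Lemma form_comb_cases (s : seq (set I)) (c : set I -> K) :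
  let g x := \sum_(A <- s) c A * form A x in
  (forall x, g x = 0) \/
  exists h, (forall M : nat, exists i, M%:R < `|h i|) /\
            forall x, g x = sym_prod (hamel_ext hb h) psi x.
Proof.
move=> g; pose h i := \sum_(A <- s) c A * weight A i.
have gE x : g x = sym_prod (hamel_ext hb h) psi x.
  by rewrite /g -sym_prod_suml; congr sym_prod; apply/funext => v; rewrite hamel_ext_sum.
have [h0|/existsNP[i0 hi0]] := pselect (forall i, h i = 0).
  left=> x; rewrite gE (_ : hamel_ext hb h = fun=> 0) ?sym_prod0l //.
  by apply/funext => v; rewrite (_ : h = fun=> 0) ?hamel_ext0 //; apply/funext.
right; exists h; split=> // M.
have hE i t k : decode i = Some (t, k) -> h i = k%:R * \sum_(A <- s) c A * \prod_(x <- t) mark A x.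
  by move=> di; rewrite /h /weight di mulr_sumr; apply: eq_bigr => A _; rewrite mulrCA.
case di0 : (decode i0) => [[t0 k0]|]; last first.
  by case: hi0; rewrite /h /weight di0 big1_In // => A _; rewrite mulr0.
move: hi0; rewrite (hE _ _ _ di0) => /eqP; rewrite mulf_eq0 negb_or => /andP[_ a0].
set a := \sum_(A <- s) _ in a0.
have [k Mk] := archi (divr_ge0 (ler0n _ M) (normr_ge0 a)).
exists (code (t0, k)); rewrite (hE _ _ _ (decode_code _)) normrM normr_nat.
by rewrite -ltr_pdivrMr // normr_gt0.
Qed.

Lemma sym_prod_unbounded h : (forall M : nat, exists i, M%:R < `|h i|) ->
  forall M : nat, exists i, M%:R < `|sym_prod (hamel_ext hb h) psi (fun _ : 'I_n => b i)|.
Proof.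
move=> hM M; have [i Mi] := hM M; exists i; rewrite sym_prod_basis normrM normr_nat.
by apply: (lt_le_trans Mi); rewrite ler_peMl ?normr_ge0 // ler1n.
Qed.

Lemma symmetric_forms_lineable : lineable_idx (set I)
  (fun L : ('I_n -> E) -> K => multilinear L /\ Defs.symmetric_form L /\ unbounded_form L).
Proof.
exists form; split=> [|s c]; first exact: form_lin_indep.
have [|[h [hM /funext ->]]] := form_comb_cases s c; [by left|right].
split; first by apply: sym_prod_multilinear; apply: hamel_ext_linear.
split=> [|M]; first exact: sym_prod_symmetric.
by have [i Mi] := sym_prod_unbounded hM M; exists (fun=> b i); split=> // _; rewrite b_unit.
Qed.

Lemma homogeneous_polys_lineable : lineable_idx (set I)
  (fun P : E -> K => homogeneous_poly n P /\ unbounded_fun P).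
Proof.
exists (fun A v => form A (fun=> v)); split=> [|s c]; first exact: diag_form_lin_indep.
have [g0|[h [hM gE]]] := form_comb_cases s c; [by left => v; apply: g0|right].
split.
  exists (sym_prod (hamel_ext hb h) psi); split.
    by apply: sym_prod_multilinear; apply: hamel_ext_linear.
  by split=> [|v]; [exact: sym_prod_symmetric|apply: gE].
by move=> M; have [i Mi] := sym_prod_unbounded hM M; exists (b i); rewrite b_unit gE.
Qed.

End Construction.

Lemma seq_pair_code_inj (I : Type) (F : seq I -> I) : injective F ->
  injective (fun p : seq I * nat => F (nseq p.2.+1 (F p.1))).
Proof.
move=> FI [t k] [t' k'] /FI eq_nseq; have := congr1 size eq_nseq; rewrite !size_nseq => -[ekk'].
by move: eq_nseq; rewrite ekk' => -[/FI ->].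
Qed.

Lemma sub_lineable_idx (K : numFieldType) (X J : Type) (M1 M2 : (X -> K) -> Prop) :
  (forall g, M1 g -> M2 g) -> lineable_idx J M1 -> lineable_idx J M2.
Proof.
move=> M12 [f [fI fM]]; exists f; split=> // s c.
by case: (fM s c) => [|/M12]; [left|right].
Qed.

Lemma homogeneous_poly_deg_le (K : numFieldType) (E : normedModType K) (n : nat) (P : E -> K) :
  (0 < n)%N -> homogeneous_poly n P -> poly_deg_le n P.
Proof.
move=> n_gt0 hP; exists 0, (fun k => if k == n then P else fun=> 0); split.
  move=> k _; case: eqP => [->//|_].
  exists (fun=> 0); split; first by move=> *; rewrite mulr0 addr0.
  by split.
move=> x; rewrite add0r big_nat_recr //= eqxx big_nat big1 ?add0r // => k /andP[_ kn].
by rewrite ltn_eqF.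
Qed.

Lemma theorem3p3_archimedean (K : numFieldType) :
  (forall x : K, 0 <= x -> exists k : nat, x < k%:R) -> theorem3p3_for K.
Proof.
move=> archi n E I b n_gt0 hb Iinf.
have b0 i : `|b i| != 0 by rewrite normr_eq0 (lin_indep_neq0 hb.1).
have hb1 := hamel_basis_scale (fun i => invr_neq0 (b0 i)) hb.
have b1_unit i : `|(`|b i|^-1 *: b i)| = 1 by rewrite normfZV // (lin_indep_neq0 hb.1).
have [F /seq_pair_code_inj codeI] := seq_inj_of_infinite Iinf.
have forms := symmetric_forms_lineable hb1 b1_unit n_gt0 codeI archi.
have polys := homogeneous_polys_lineable hb1 b1_unit n_gt0 codeI archi.
split=> //.
- by apply: sub_lineable_idx forms => L [? []].
- by apply: sub_lineable_idx polys => P [/(homogeneous_poly_deg_le n_gt0)].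
Qed.

Lemma archimedean_complex (R : realType) (x : R[i]) : 0 <= x -> exists k : nat, x < k%:R.
Proof.
move=> x_ge0; exists (Num.bound (complex.Re x)).
rewrite -(rmorph_nat (complex.real_complex R)) complex.ltcE /= (ger0_Im x_ge0) eqxx /=.
by apply: archi_boundP; move: x_ge0; rewrite complex.lecE /= => /andP[].
Qed.

Theorem theorem3p3 (R : realType) : theorem3p3_for R /\ theorem3p3_for R[i].
Proof.
split; apply: theorem3p3_archimedean; last exact: archimedean_complex.
by move=> x x_ge0; exists (Num.bound x); apply: archi_boundP.
Qed.
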